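(* Let $N=\{1,\dots,n\}$ with $n\ge 2$ and $\mathcal{D}=\mathbb{R}^n_+$. A rule $R:\mathcal{D}\to\mathbb{R}^n_+$ satisfies scale invariance, downstream impartiality, upstream invariance, and order preservation if and only if it is the no-transfer rule, i.e. $R_i(e)=e_i$ for each $e\in\mathcal{D}$ and each $i\in N$.
   Context: Agents $1,\dots,n$ are located along a linear river, lower index meaning more upstream; agent $i$ has river inflow $e_i\ge 0$, and $e=(e_1,\dots,e_n)\in\mathcal{D}=\mathbb{R}^n_+$. An allocation for $e$ is $x\in\mathbb{R}^n_+$ with $\sum_{i=1}^n x_i=\sum_{i=1}^n e_i$ and $\sum_{i=1}^k x_i\le\sum_{i=1}^k e_i$ for each $k=1,\dots,n-1$. A rule is a map $R:\mathcal{D}\to\mathbb{R}^n_+$ assigning to each $e$ an allocation $R(e)$ for $e$. Axioms: Scale invariance: for each $e\in\mathcal{D}$ and each $\gamma\in\mathbb{R}_+$, $R(\gamma e)=\gamma R(e)$. Upstream invariance: for each $e,e'\in\mathcal{D}$ such that $e_i<e'_i$ for some $i\in N$ and $e_j=e'_j$ for all $j\ne i$, we have $R_k(e)=R_k(e')$ for each $k<i$. Downstream impartiality: for each $e,e'\in\mathcal{D}$ such that $e_i<e'_i$ for some $i\in N$ and $e_j=e'_j$ for all $j\ne i$, and for each $k,l>i$ with $e_k=e_l$, we have $R_k(e')-R_k(e)=R_l(e')-R_l(e)$. Order preservation: for each $e\in\mathcal{D}$ and $i,j\in N$, if $i<j$ and $e_i\ge e_j$ then $R_i(e)\ge R_j(e)$.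 *)

From HB Require Import structures.
From mathcomp Require Import all_boot all_order all_algebra.
From mathcomp Require Import Rstruct.
Set Implicit Arguments. Unset Strict Implicit. Unset Printing Implicit Defensive.
Import Order.TTheory GRing.Theory Num.Theory.
Local Open Scope ring_scope.

(* Agents are indexed by 'I_n: ordinal i corresponds to agent i+1; a smaller
   index is more upstream. A profile (or allocation) is a map 'I_n -> R. *)
Definition profile (n : nat) := 'I_n -> Rdefinitions.R.

Definition nonneg (n : nat) (e : profile n) : Prop := forall i, (0 <= e i)%R.

Definition allocation (n : nat) (e x : profile n) : Prop :=
  nonneg x /\
  \sum_(i < n) x i = \sum_(i < n) e i /\
  (forall k : nat, (k < n.-1)%N ->
     \sum_(i < n | (i <= k)%N) x i <= \sum_(i < n | (i <= k)%N) e i).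

Definition is_rule (n : nat) (Rl : profile n -> profile n) : Prop :=
  forall e, nonneg e -> allocation e (Rl e).

Definition raise_at (n : nat) (e e' : profile n) (i : 'I_n) : Prop :=
  e i < e' i /\ (forall j, j != i -> e j = e' j).

Definition scale_invariance (n : nat) (Rl : profile n -> profile n) : Prop :=
  forall (e : profile n) (g : Rdefinitions.R), nonneg e -> 0 <= g ->
    Rl (fun i => g * e i) = (fun i => g * Rl e i).

Definition upstream_invariance (n : nat) (Rl : profile n -> profile n) : Prop :=
  forall (e e' : profile n) (i : 'I_n), nonneg e -> nonneg e' -> raise_at e e' i ->
    forall k : 'I_n, (k < i)%N -> Rl e k = Rl e' k.

Definition downstream_impartiality (n : nat) (Rl : profile n -> profile n) : Prop :=
  forall (e e' : profile n) (i : 'I_n), nonneg e -> nonneg e' -> raise_at e e' i ->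
    forall k l : 'I_n, (i < k)%N -> (i < l)%N -> e k = e l ->
      Rl e' k - Rl e k = Rl e' l - Rl e l.

Definition order_preservation (n : nat) (Rl : profile n -> profile n) : Prop :=
  forall (e : profile n) (i j : 'I_n), nonneg e -> (i < j)%N -> e j <= e i ->
    Rl e j <= Rl e i.

Definition no_transfer (n : nat) (Rl : profile n -> profile n) : Prop :=
  forall (e : profile n), nonneg e -> forall i, Rl e i = e i.

From mathcomp Require Import all_boot all_order all_algebra.
From mathcomp Require Import Rstruct.
From mathcomp Require Import lra zify.
From Stdlib Require Import FunctionalExtensionality.
Set Implicit Arguments. Unset Strict Implicit. Unset Printing Implicit Defensive.
Import Order.TTheory GRing.Theory Num.Theory.
Local Open Scope ring_scope.

(* Upstream invariance makes R_i(e) depend on e_1, ..., e_i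
   only, so we may flatten the profile downstream of i to the value e_i.  By
   induction every upstream agent j < i already receives e_j; order
   preservation then bounds each downstream share by R_i(e), so balancing the
   total forces R_i(e) >= e_i, while the prefix constraint at i gives
   R_i(e) <= e_i. *)

Section OrdinalSums.
Variables (V : nmodType) (n : nat).

Lemma sum_ord_le_split (F : 'I_n -> V) (i : 'I_n) :
  \sum_(j < n | (j <= i)%N) F j = \sum_(j < n | (j < i)%N) F j + F i.
Proof.
rewrite (bigD1 i) //= addrC; congr (_ + _); apply: eq_bigl => j.
by rewrite ltn_neqAle val_eqE andbC.
Qed.

Lemma sum_ord_split (F : 'I_n -> V) (i : nat) :
  \sum_(j < n) F j = \sum_(j < n | (j <= i)%N) F j + \sum_(j < n | (i < j)%N) F j.
Proof.
rewrite (bigID (fun j : 'I_n => (j <= i)%N)) /=; congr (_ + _).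
by apply: eq_bigl => j; rewrite ltnNge.
Qed.

End OrdinalSums.

Lemma allocation_prefix_le (n : nat) (e x : profile n) (k : nat) :
  allocation e x ->
  \sum_(i < n | (i <= k)%N) x i <= \sum_(i < n | (i <= k)%N) e i.
Proof.
case=> _ [total prefix]; have [lt_k|le_k] := ltnP k n.-1; first exact: prefix.
have all_le (F : profile n) : \sum_(i < n | (i <= k)%N) F i = \sum_(i < n) F i.
  by apply: eq_bigl => i; have := ltn_ord i; lia.
by rewrite !all_le total.
Qed.

Lemma raise_atE (n : nat) (e e' : profile n) (i k : 'I_n) :
  raise_at e e' i -> (i != k :> nat) -> e k = e' k.
Proof. by case=> _ others ne_ik; apply: others; rewrite eq_sym -val_eqE. Qed.

Section NoTransfer.
Variables (n : nat) (Rl : profile n -> profile n).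
Hypotheses (rule_Rl : is_rule Rl) (upstream_Rl : upstream_invariance Rl)
  (order_Rl : order_preservation Rl).

Lemma upstream_invariance_change_at (e e' : profile n) (j k : 'I_n) :
  nonneg e -> nonneg e' -> (k < j)%N -> (forall i, i != j -> e i = e' i) ->
  Rl e k = Rl e' k.
Proof.
move=> ne ne' lt_kj others.
have [lt_e|lt_e'|eq_e] := ltgtP (e j) (e' j).
- exact: (upstream_Rl ne ne' (conj lt_e others)).
- by symmetry; apply: (upstream_Rl ne' ne _ lt_kj); split=> // i /others.
- congr (Rl _ k); apply: functional_extensionality => i.
  by case: (eqVneq i j) => [->|/others].
Qed.

Lemma upstream_invariance_prefix (e e' : profile n) (k : 'I_n) :
  nonneg e -> nonneg e' -> (forall i : 'I_n, (i <= k)%N -> e i = e' i) ->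
  Rl e k = Rl e' k.
Proof.
move=> ne ne' agree.
pose f m : profile n := fun i => if (i < m)%N then e' i else e i.
have nf m : nonneg (f m) by move=> i; rewrite /f; case: ifP.
have f_step m : Rl (f m) k = Rl (f m.+1) k.
  have [lt_mn|le_nm] := ltnP m n; last first.
    congr (Rl _ k); apply: functional_extensionality => i; rewrite /f.
    by rewrite (leq_trans (ltn_ord i) le_nm) (leq_trans (ltn_ord i) (leqW le_nm)).
  pose j := Ordinal lt_mn.
  have others i : i != j -> f m i = f m.+1 i.
    move=> ne_ij; rewrite /f ltnS [(i <= m)%N]leq_eqVlt.
    by have /negbTE -> : i != m :> nat := ne_ij.
  have [le_jk|lt_kj] := leqP j k; last first.
    exact: upstream_invariance_change_at (nf m) (nf m.+1) lt_kj others.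
  congr (Rl _ k); apply: functional_extensionality => i.
  case: (eqVneq i j) => [->|/others //].
  by rewrite /f /= ltnn ltnSn agree.
have f_all m : Rl e k = Rl (f m) k.
  elim: m => [|m IH]; last by rewrite IH f_step.
  by congr (Rl _ k); apply: functional_extensionality => i; rewrite /f ltn0.
rewrite (f_all n); congr (Rl _ k); apply: functional_extensionality => i.
by rewrite /f ltn_ord.
Qed.

Definition flat_after (e : profile n) (i : 'I_n) : profile n :=
  fun j => if (j <= i)%N then e j else e i.

Section Step.
Variable i : 'I_n.
Hypothesis upstream_no_transfer :
  forall j : 'I_n, (j < i)%N -> forall e, nonneg e -> Rl e j = e j.

Lemma no_transfer_flat (e : profile n) :
  nonneg e -> (forall j : 'I_n, (i < j)%N -> e j = e i) -> Rl e i = e i.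
Proof.
move=> ne flat.
have [_ [total _]] := rule_Rl ne.
have prefix := allocation_prefix_le i (rule_Rl ne).
have upstream_eq : \sum_(j < n | (j < i)%N) Rl e j = \sum_(j < n | (j < i)%N) e j.
  by apply: eq_bigr => j lt_ji; rewrite upstream_no_transfer.
have tail_le : Rl e i < e i ->
    \sum_(j < n | (i < j)%N) Rl e j <= \sum_(j < n | (i < j)%N) e j.
  move=> lt_Rl; apply: ler_sum => j lt_ij; rewrite flat //.
  apply: le_trans (ltW lt_Rl); apply: order_Rl => //.
  by rewrite flat.
move: total prefix; rewrite !(sum_ord_split _ i) !sum_ord_le_split upstream_eq.
move=> total prefix; apply/eqP; rewrite eq_le; apply/andP; split; first lra.
by rewrite leNgt; apply/negP => lt_Rl; have := tail_le lt_Rl; lra.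
Qed.

Lemma no_transfer_step (e : profile n) : nonneg e -> Rl e i = e i.
Proof.
move=> ne; have nflat : nonneg (flat_after e i).
  by move=> j; rewrite /flat_after; case: ifP.
rewrite (@upstream_invariance_prefix _ (flat_after e i)) //; last first.
  by move=> j le_ji; rewrite /flat_after le_ji.
rewrite no_transfer_flat // ?/flat_after ?leqnn // => j lt_ij.
by rewrite leqNgt lt_ij.
Qed.

End Step.

Lemma upstream_invariance_order_preservation_no_transfer : no_transfer Rl.
Proof.
move=> e ne i; move: i e ne.
suff: forall m (i : 'I_n), i = m :> nat -> forall e, nonneg e -> Rl e i = e i.
  by move=> all_m i; exact: all_m.
elim/ltn_ind=> m IH i eq_im; apply: no_transfer_step => j lt_ji.
by apply: (IH j) => //; rewrite -eq_im.
Qed.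

End NoTransfer.

Section NoTransferAxioms.
Variables (n : nat) (Rl : profile n -> profile n).
Hypothesis no_transfer_Rl : no_transfer Rl.

Lemma no_transfer_scale_invariance : scale_invariance Rl.
Proof.
move=> e g ne g_ge0; apply: functional_extensionality => i.
by rewrite !no_transfer_Rl // => j; apply: mulr_ge0.
Qed.

Lemma no_transfer_downstream_impartiality : downstream_impartiality Rl.
Proof.
move=> e e' i ne ne' raise k l lt_ik lt_il _.
rewrite !no_transfer_Rl // (raise_atE raise (negbT (ltn_eqF lt_ik))).
by rewrite (raise_atE raise (negbT (ltn_eqF lt_il))) !subrr.
Qed.

Lemma no_transfer_upstream_invariance : upstream_invariance Rl.
Proof.
move=> e e' i ne ne' raise k lt_ki.
by rewrite !no_transfer_Rl // (raise_atE raise (negbT (gtn_eqF lt_ki))).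
Qed.

Lemma no_transfer_order_preservation : order_preservation Rl.
Proof. by move=> e i j ne _ le_e; rewrite !no_transfer_Rl. Qed.

End NoTransferAxioms.

Theorem theorem3 (n : nat) (Rl : profile n -> profile n) :
  (2 <= n)%N -> is_rule Rl ->
  (scale_invariance Rl /\ downstream_impartiality Rl /\
   upstream_invariance Rl /\ order_preservation Rl) <-> no_transfer Rl.
Proof.
move=> _ rule_Rl; split.
  by case=> _ [_ [upstream_Rl order_Rl]];
    exact: upstream_invariance_order_preservation_no_transfer.
move=> no_transfer_Rl; split; first exact: no_transfer_scale_invariance.
split; first exact: no_transfer_downstream_impartiality.
split; first exact: no_transfer_upstream_invariance.
exact: no_transfer_order_preservation.
Qed.
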